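(* Let $(R,\mathfrak m,k)$ be a commutative noetherian local ring with $\mathfrak m^4=0$ and $H_R(-1)=0$. For $a,b\in\mathfrak m\smallsetminus\mathfrak m^2$ the following are equivalent: (1) $a,b$ form an exact pair of zero divisors; (2) $(0:_R a)=bR$; (3) $ab=0$, $a\mathfrak m^2=\mathfrak m^3=b\mathfrak m^2$, and $\mu(a\mathfrak m)=\mu(\mathfrak m)-1=\mu(b\mathfrak m)$.
   Context: For a local ring $(R,\mathfrak m,k)$, the Hilbert series is $H_R(t)=\sum_{n\ge0}\operatorname{rank}_k(\mathfrak m^n/\mathfrak m^{n+1})t^n$. $\mu(N)$ denotes the minimal number of generators of a finitely generated $R$-module $N$. Elements $a,b$ form an exact pair of zero divisors if $a,b$ are nonzero non-units with $(0:_R a)=bR$ and $(0:_R b)=aR$. *)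

From HB Require Import structures.
From mathcomp Require Import all_boot all_order all_algebra.
Set Implicit Arguments. Unset Strict Implicit. Unset Printing Implicit Defensive.
Import GRing.Theory.
Local Open Scope ring_scope.

Section LocalRingDefs.
Variable R : comUnitRingType.

Definition subset_eq (I J : R -> Prop) := forall x, I x <-> J x.

Definition is_ideal (I : R -> Prop) :=
  [/\ I 0, (forall x y, I x -> I y -> I (x + y)) & (forall r x, I x -> I (r * x))].

Definition lin_comb (s : seq R) (x : R) :=
  exists c : nat -> R, x = \sum_(i < size s) c i * s`_i.

Definition generates (s : seq R) (I : R -> Prop) := forall x, I x <-> lin_comb s x.

Definition noetherian := forall I, is_ideal I -> exists s, generates s I.

(* the set of non-units; in a local ring this is the maximal ideal m *)
Definition maxideal : R -> Prop := fun x => x \notin GRing.unit.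

Definition local_ring := forall x y, maxideal x -> maxideal y -> maxideal (x + y).

Definition ideal_mul (I J : R -> Prop) : R -> Prop := fun x =>
  exists s : seq (R * R), (forall p, p \in s -> I p.1 /\ J p.2) /\
                          x = \sum_(p <- s) p.1 * p.2.

Fixpoint mpow (n : nat) : R -> Prop :=
  match n with
  | 0 => fun _ => True
  | n'.+1 => ideal_mul (mpow n') maxideal
  end.

Definition scale (a : R) (I : R -> Prop) : R -> Prop := fun x => exists y, I y /\ x = a * y.

Definition ann (a : R) : R -> Prop := fun x => x * a = 0.

Definition principal (b : R) : R -> Prop := fun x => exists r, x = b * r.

Definition mu (I : R -> Prop) (n : nat) :=
  (exists s, size s = n /\ generates s I) /\ (forall s, generates s I -> (n <= size s)%N).

(* s lifts a k-basis of m^n / m^(n+1), k = R/m *)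
Definition gr_basis (n : nat) (s : seq R) :=
  [/\ (forall x, x \in s -> mpow n x),
      (forall c : nat -> R, mpow n.+1 (\sum_(i < size s) c i * s`_i) ->
          forall i, (i < size s)%N -> maxideal (c i)) &
      (forall y, mpow n y -> exists c : nat -> R,
          mpow n.+1 (y - \sum_(i < size s) c i * s`_i))].

Definition hilb_coeff (n t : nat) := exists s, size s = t /\ gr_basis n s.

(* H_R(-1) = 0, for R with m^N = 0 for some N (so H_R is a polynomial) *)
Definition hilbert_minus1_zero :=
  exists (N : nat) (e : nat -> nat),
    [/\ (forall n, hilb_coeff n (e n)),
        (forall n, (N <= n)%N -> e n = 0%N) &
        \sum_(n < N) (-1) ^+ n * (e n)%:R = 0 :> int].

Definition exact_pair (a b : R) :=
  [/\ a != 0, b != 0, a \notin GRing.unit, b \notin GRing.unit &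
      subset_eq (ann a) (principal b) /\ subset_eq (ann b) (principal a)].

End LocalRingDefs.

(* Pass to the associated graded ring.  With bases of m^i/m^(i+1) over k = R/m, multiplication
   by r in m becomes matrices M1 r : gr_1 -> gr_2 and M2 r : gr_2 -> gr_3, and by Nakayama
   mu(r m) = rank (M1 r) as soon as r m^2 = m^3.  Since m^4 = 0, H_R(-1) = 0 reads
   e_2 + 1 = e_1 + e_3.
   If (0 : a) = bR, then ker (M2 a) lies in the image of M1 b, while M1 b kills the class of a;
   this dimension count forces M2 a to be onto (a m^2 = m^3) and M1 b to have corank one, and
   the remaining conditions follow by lifting.  Conversely, under (3) the kernel of M1 a is the
   line through the class of b and ker (M2 a) = im (M1 b), so any x with x a = 0 can be divided
   by b successively modulo m^2, m^3 and m^4 = 0. *)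

From HB Require Import structures.
From mathcomp Require Import all_boot all_order all_algebra.
From mathcomp Require Import zify ring.
From Stdlib Require Import ClassicalEpsilon.
Set Implicit Arguments. Unset Strict Implicit. Unset Printing Implicit Defensive.
Import GRing.Theory.
Local Open Scope ring_scope.

Section IdealArithmetic.
Variable R : comUnitRingType.
Implicit Types (I J : R -> Prop) (b r t x y : R).

Lemma maxideal0 : maxideal (0 : R).
Proof. by rewrite /maxideal unitr0. Qed.

Lemma maxidealMl r x : maxideal x -> maxideal (r * x).
Proof. by rewrite /maxideal unitrM negb_and => ->; rewrite orbT. Qed.

Lemma ideal_mul0 I J : ideal_mul I J 0.
Proof. by exists [::]; rewrite big_nil. Qed.

Lemma ideal_mulD I J x y : ideal_mul I J x -> ideal_mul I J y -> ideal_mul I J (x + y).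
Proof.
move=> [s [Hs ->]] [t [Ht ->]]; exists (s ++ t); split; last by rewrite big_cat.
by move=> p; rewrite mem_cat => /orP [/Hs|/Ht].
Qed.

Lemma mem_ideal_mul I J x y : I x -> J y -> ideal_mul I J (x * y).
Proof.
by move=> Hx Hy; exists [:: (x, y)]; rewrite big_seq1; split=> // p; rewrite inE => /eqP ->.
Qed.

Lemma ideal_mulMl I J r x :
  (forall r y, I y -> I (r * y)) -> ideal_mul I J x -> ideal_mul I J (r * x).
Proof.
move=> HI [s [Hs ->]]; exists [seq (r * p.1, p.2) | p <- s]; split.
  by move=> p /mapP [q /Hs [H1 H2] ->]; split => //=; apply: HI.
by rewrite big_map mulr_sumr; apply: eq_bigr => p _ /=; rewrite mulrA.
Qed.

Lemma ideal_mulS I I' J J' x : (forall y, I y -> I' y) -> (forall y, J y -> J' y) ->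
  ideal_mul I J x -> ideal_mul I' J' x.
Proof. by move=> HI HJ [s [Hs ->]]; exists s; split => // p /Hs [/HI ? /HJ ?]. Qed.

Lemma mpow0 n : mpow n (0 : R).
Proof. by case: n => //= n; apply: ideal_mul0. Qed.

Lemma mpowMl n r x : mpow n x -> mpow n (r * x).
Proof. by elim: n r x => // n IH r x /= H; apply: ideal_mulMl H; apply: IH. Qed.

Lemma mpowMr n r x : mpow n x -> mpow n (x * r).
Proof. by rewrite mulrC; apply: mpowMl. Qed.

Lemma mpowD n x y : mpow n x -> mpow n y -> mpow n (x + y).
Proof. by case: n => // n; apply: ideal_mulD. Qed.

Lemma mpowB n x y : mpow n x -> mpow n y -> mpow n (x - y).
Proof. by move=> Hx Hy; apply: mpowD => //; rewrite -mulN1r; apply: mpowMl. Qed.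

Lemma mpow_sum n k (F : 'I_k -> R) : (forall i, mpow n (F i)) -> mpow n (\sum_(i < k) F i).
Proof. by move=> H; apply: (big_ind (mpow n)) => //; [apply: mpow0 | apply: mpowD]. Qed.

Lemma mpowSW n x : mpow n.+1 x -> mpow n x.
Proof.
move=> [s [Hs ->]]; rewrite big_seq; apply: (big_ind (mpow n)); [exact: mpow0 | exact: mpowD |].
by move=> p /Hs [H _]; apply: mpowMr.
Qed.

Lemma mpow_le m n x : (m <= n)%N -> mpow n x -> mpow m x.
Proof. by move=> /subnK <-; elim: (n - m)%N x => // d IH x /mpowSW; apply: IH. Qed.

Lemma mpow_mul i j x y : mpow i x -> mpow j y -> mpow (i + j) (x * y).
Proof.
elim: j y => [|j IH] y Hx; first by rewrite addn0 => _; apply: mpowMr.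
move=> [s [Hs ->]]; rewrite addnS mulr_sumr big_seq.
apply: (big_ind (mpow (i + j).+1)); [exact: mpow0 | exact: mpowD |].
by move=> p /Hs [H1 H2]; rewrite mulrA; apply: mem_ideal_mul => //; apply: IH.
Qed.

Lemma mpow_maxidealMl n r x : maxideal r -> mpow n x -> mpow n.+1 (r * x).
Proof. by rewrite mulrC => Hr Hx; apply: mem_ideal_mul. Qed.

Lemma scale_mpow r n x : maxideal r -> scale r (mpow n) x -> mpow n.+1 x.
Proof. by move=> Hr [y [Hy ->]]; apply: mpow_maxidealMl. Qed.

Lemma maxideal_cofactor n b t : ~ mpow n b -> mpow n (b * t) -> maxideal t.
Proof. by move=> Hb Hbt; apply/negP => Ht; apply: Hb; rewrite -(mulrK Ht b); apply: mpowMr. Qed.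

Hypothesis Hloc : local_ring R.

Lemma mpow1E x : mpow 1 x <-> maxideal x.
Proof.
split=> [[s [Hs ->]]|H]; last by rewrite -[x]mul1r; apply: mem_ideal_mul.
rewrite big_seq; apply: (big_ind (@maxideal R)); [exact: maxideal0 | exact: Hloc |].
by move=> p /Hs [_ H]; apply: maxidealMl.
Qed.

End IdealArithmetic.

Section ResidueField.
Variable R : comUnitRingType.
Hypothesis Hloc : local_ring R.
Local Open Scope quotient_scope.

Definition maxideal_pred : {pred R} := [pred x | x \notin GRing.unit].

Lemma maxideal_pred_closed : idealr_closed maxideal_pred.
Proof.
split; rewrite ?inE ?unitr0 ?unitr1 // => r u v; rewrite !inE => hu hv.
by apply: Hloc => //; apply: maxidealMl.
Qed.

HB.instance Definition _ := isIdealr.Build R maxideal_pred maxideal_pred_closed.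

Definition residue_field := {ideal_quot maxideal_pred}.
HB.instance Definition _ := GRing.ComNzRing.on residue_field.

Definition residue : R -> residue_field := \pi_residue_field.

Lemma residue_eq0 x : residue x = 0 <-> maxideal x.
Proof.
rewrite /residue -(rmorph0 (\pi_residue_field : R -> _)).
by split => [/eqP|H]; [|apply/eqP]; rewrite -Quotient.idealrBE subr0 // inE.
Qed.

Lemma residueK q : residue (repr q) = q.
Proof. exact: reprK. Qed.

Lemma residueD x y : residue (x + y) = residue x + residue y.
Proof. exact: rmorphD. Qed.

Lemma residueM x y : residue (x * y) = residue x * residue y.
Proof. exact: rmorphM. Qed.

Lemma residue_eq x y : residue x = residue y <-> maxideal (x - y).
Proof.
rewrite -residue_eq0 /residue rmorphB /=.
by split=> [->|/eqP]; [rewrite subrr | rewrite subr_eq0 => /eqP].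
Qed.

(* A nonzero residue class consists of units, so inverting a representative inverts it. *)
Definition residue_inv (q : residue_field) : residue_field :=
  residue (let x := repr q in if x \is a GRing.unit then x^-1 else 0).

Lemma residue_mulVf q : q != 0 -> residue_inv q * q = 1.
Proof.
rewrite /residue_inv; set x := repr q.
have qE : q = residue x by rewrite /x residueK.
rewrite {1}qE => q0.
have Hu : x \is a GRing.unit by apply/negPn/negP => /residue_eq0 /eqP; rewrite (negPf q0).
by rewrite Hu qE -residueM mulVr // /residue rmorph1.
Qed.

Lemma residue_inv0 : residue_inv 0 = 0.
Proof.
rewrite /residue_inv; set x := repr (0 : residue_field).
have : maxideal x by apply/residue_eq0; rewrite /x residueK.
by rewrite /maxideal => /negPf ->; rewrite /residue rmorph0.
Qed.

HB.instance Definition _ := GRing.ComNzRing_isField.Build residue_field residue_mulVf residue_inv0.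

Definition residue_lift m (v : 'rV[residue_field]_m) (i : nat) : R :=
  if insub i is Some j then repr (v 0 j) else 0.

Lemma residue_liftE m (v : 'rV[residue_field]_m) (i : 'I_m) : residue (residue_lift v i) = v 0 i.
Proof. by rewrite /residue_lift valK residueK. Qed.

End ResidueField.

Section GradedCoordinates.
Variable R : comUnitRingType.
Hypothesis Hloc : local_ring R.
Variables (n : nat) (s : seq R).
Hypothesis Hs : gr_basis n s.

Local Notation residue := (residue Hloc).

Definition gr_approx (y : R) (c : nat -> R) :=
  mpow n.+1 (y - \sum_(i < size s) c i * s`_i).

Definition gr_coef (y : R) : nat -> R := epsilon (inhabits (fun _ => 0)) (gr_approx y).

(* Coordinates of the class of y in m^n/m^(n+1); junk unless mpow n y. *)
Definition gr_coord (y : R) : 'rV[residue_field Hloc]_(size s) :=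
  \row_(i < size s) residue (gr_coef y i).

Lemma gr_basis_mpow (i : 'I_(size s)) : mpow n s`_i.
Proof. by case: Hs => H _ _; apply/H/mem_nth. Qed.

Lemma gr_coefP y : mpow n y -> gr_approx y (gr_coef y).
Proof. by move=> Hy; apply: epsilon_spec; case: Hs => _ _; apply. Qed.

Lemma gr_approx_residue y c c' : gr_approx y c -> gr_approx y c' ->
  forall i : 'I_(size s), residue (c i) = residue (c' i).
Proof.
move=> H H' i; apply/residue_eq; case: Hs => _ Hind _.
apply: (Hind (fun j => c j - c' j)) (ltn_ord i).
have -> : \sum_(j < size s) (c j - c' j) * s`_j =
          (y - \sum_(j < size s) c' j * s`_j) - (y - \sum_(j < size s) c j * s`_j).
  rewrite (eq_bigr (fun j : 'I_(size s) => c j * s`_j - c' j * s`_j)) ?sumrB; first ring.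
  by move=> j _; rewrite mulrBl.
exact: mpowB.
Qed.

Lemma gr_coordE y c : mpow n y -> gr_approx y c -> gr_coord y = \row_i residue (c i).
Proof.
by move=> Hy Hc; apply/rowP => i; rewrite !mxE; apply: gr_approx_residue (gr_coefP Hy) Hc i.
Qed.

Lemma gr_coordD x y : mpow n x -> mpow n y -> gr_coord (x + y) = gr_coord x + gr_coord y.
Proof.
move=> Hx Hy; rewrite (@gr_coordE _ (fun i => gr_coef x i + gr_coef y i)); first 1 last.
- exact: mpowD.
- rewrite /gr_approx.
  have -> : \sum_(i < size s) (gr_coef x i + gr_coef y i) * s`_i =
            \sum_(i < size s) gr_coef x i * s`_i + \sum_(i < size s) gr_coef y i * s`_i.
    by rewrite -big_split; apply: eq_bigr => j _; rewrite mulrDl.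
  by rewrite opprD addrACA; apply: mpowD; apply: gr_coefP.
by apply/rowP => i; rewrite !mxE residueD.
Qed.

Lemma gr_coordMl r y : mpow n y -> gr_coord (r * y) = residue r *: gr_coord y.
Proof.
move=> Hy; rewrite (@gr_coordE _ (fun i => r * gr_coef y i)); first 1 last.
- exact: mpowMl.
- rewrite /gr_approx; have := mpowMl r (gr_coefP Hy); congr mpow.
  by rewrite mulrBr mulr_sumr; congr (_ - _); apply: eq_bigr => i _; rewrite mulrA.
by apply/rowP => i; rewrite !mxE residueM.
Qed.

Lemma gr_coordB x y : mpow n x -> mpow n y -> gr_coord (x - y) = gr_coord x - gr_coord y.
Proof.
move=> Hx Hy; rewrite -mulN1r gr_coordD ?gr_coordMl //; last exact: mpowMl.
by rewrite /residue rmorphN1 scaleN1r.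
Qed.

Lemma gr_coord_eq0 y : mpow n y -> gr_coord y = 0 <-> mpow n.+1 y.
Proof.
move=> Hy; split=> [H|H]; last first.
  rewrite (@gr_coordE _ (fun _ => 0)) //; last first.
    by rewrite /gr_approx big1 ?subr0 // => i _; rewrite mul0r.
  by apply/rowP => i; rewrite !mxE /residue rmorph0.
set S := \sum_(i < size s) gr_coef y i * s`_i; have -> : y = (y - S) + S by rewrite subrK.
apply: mpowD; first exact: gr_coefP.
apply: mpow_sum => i; rewrite mulrC; apply: mem_ideal_mul; first exact: gr_basis_mpow.
by apply/residue_eq0; have := congr1 (fun v : 'rV_(size s) => v 0 i) H; rewrite !mxE.
Qed.

Lemma gr_coord0 : gr_coord 0 = 0.
Proof. by apply/gr_coord_eq0; apply: mpow0. Qed.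

Lemma gr_coord_inj x y : mpow n x -> mpow n y -> gr_coord x = gr_coord y -> mpow n.+1 (x - y).
Proof. by move=> Hx Hy H; apply/gr_coord_eq0; [apply: mpowB | rewrite gr_coordB // H subrr]. Qed.

Lemma gr_coord_sum p (c : nat -> R) (y : 'I_p -> R) : (forall j, mpow n (y j)) ->
  gr_coord (\sum_(j < p) c j * y j) = \sum_(j < p) residue (c j) *: gr_coord (y j).
Proof.
move=> Hy; suff [] : mpow n (\sum_(j < p) c j * y j) /\
  gr_coord (\sum_(j < p) c j * y j) = \sum_(j < p) residue (c j) *: gr_coord (y j) by [].
apply: (big_ind2 (fun x v => mpow n x /\ gr_coord x = v)).
- by split; [apply: mpow0 | apply: gr_coord0].
- by move=> x1 v1 x2 v2 [H1 <-] [H2 <-]; split; [apply: mpowD | rewrite gr_coordD].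
- by move=> j _; split; [apply: mpowMl | rewrite gr_coordMl].
Qed.

Lemma gr_coord_comb p (c : nat -> R) (y : 'I_p -> R) : (forall j, mpow n (y j)) ->
  gr_coord (\sum_(j < p) c j * y j) =
  (\row_(j < p) residue (c j)) *m (\matrix_(j < p) gr_coord (y j)).
Proof.
move=> Hy; rewrite gr_coord_sum // mulmx_sum_row.
by apply: eq_bigr => j _; rewrite rowK mxE.
Qed.

Definition gr_lift (v : 'rV[residue_field Hloc]_(size s)) : R :=
  \sum_(i < size s) residue_lift v i * s`_i.

Lemma gr_lift_mpow v : mpow n (gr_lift v).
Proof. by apply: mpow_sum => i; apply/mpowMl/gr_basis_mpow. Qed.

Lemma gr_coord_lift v : gr_coord (gr_lift v) = v.
Proof.
rewrite (@gr_coordE _ (residue_lift v)); first by apply/rowP => i; rewrite !mxE residue_liftE.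
  exact: gr_lift_mpow.
by rewrite /gr_approx subrr; apply: mpow0.
Qed.

End GradedCoordinates.

Section GradedMultiplication.
Variable R : comUnitRingType.
Hypothesis Hloc : local_ring R.

Local Notation gr_coord := (gr_coord Hloc).

Definition gr_mulmx n (s s' : seq R) (r : R) : 'M[residue_field Hloc]_(size s, size s') :=
  \matrix_(i < size s) gr_coord n.+1 s' (r * s`_i).

Lemma gr_coord_mul n (s s' : seq R) r y : gr_basis n s -> gr_basis n.+1 s' ->
  maxideal r -> mpow n y -> gr_coord n.+1 s' (r * y) = gr_coord n s y *m gr_mulmx n s s' r.
Proof.
move=> Hs Hs' Hr Hy.
set S := \sum_(i < size s) gr_coef n s y i * s`_i.
have -> : r * y = \sum_(i < size s) gr_coef n s y i * (r * s`_i) + r * (y - S).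
  by rewrite mulrBr mulr_sumr (eq_bigr _ (fun i _ => mulrCA r _ _)) addrC subrK.
have Hz : mpow n.+2 (r * (y - S)) by apply: mpow_maxidealMl => //; apply: gr_coefP.
have Hrs (i : 'I_(size s)) : mpow n.+1 (r * s`_i).
  by apply: mpow_maxidealMl => //; apply: gr_basis_mpow.
rewrite (gr_coordD Hloc Hs'); last 2 first.
- by apply: mpow_sum => i; apply: mpowMl.
- exact: mpowSW.
by rewrite (proj2 (gr_coord_eq0 Hloc Hs' (mpowSW Hz)) Hz) addr0 (gr_coord_comb Hloc Hs').
Qed.

Lemma gr_basis_size_le n (s s' : seq R) : gr_basis n s -> gr_basis n s' -> (size s <= size s')%N.
Proof.
move=> Hs Hs'; pose M := \matrix_(j < size s) gr_coord n s' s`_j.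
suff indep (w : 'rV_(size s)) : w *m M = 0 -> w = 0.
  have K0 : kermx M = 0.
    by apply/row_matrixP => i; rewrite row0; apply: indep; rewrite -row_mul mulmx_ker row0.
  by have := mxrank_ker M; have := rank_leq_col M; rewrite K0 mxrank0; lia.
move=> wM; have : gr_coord n s' (gr_lift w) = 0.
  rewrite /gr_lift (gr_coord_comb Hloc Hs'); last exact: gr_basis_mpow.
  by rewrite -wM; congr (_ *m _); apply/rowP => j; rewrite !mxE residue_liftE.
move/(gr_coord_eq0 Hloc Hs' (gr_lift_mpow Hs w)); case: Hs => _ Hind _ /Hind Hc.
by apply/rowP => j; rewrite mxE -residue_liftE; apply/residue_eq0/Hc.
Qed.

Lemma gr_basis_size n (s s' : seq R) : gr_basis n s -> gr_basis n s' -> size s = size s'.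
Proof.
by move=> H H'; apply/eqP; rewrite eqn_leq (gr_basis_size_le H H') (gr_basis_size_le H' H).
Qed.

End GradedMultiplication.

Section CorankOne.
Variables (F : fieldType) (p q : nat) (A : 'M[F]_(p, q)) (v : 'rV[F]_p).
Hypotheses (v_neq0 : v != 0) (vA : v *m A = 0).

Lemma rank_of_kernel_line :
  (forall w : 'rV_p, w *m A = 0 -> exists l, w = l *: v) -> \rank A = (p - 1)%N.
Proof.
move=> line.
have s1 : (v <= kermx A)%MS by apply/sub_kermxP.
have s2 : (kermx A <= v)%MS.
  apply/row_subP => i; have [|l ->] := line (row i (kermx A)); last by rewrite scalemx_sub.
  by rewrite -row_mul mulmx_ker row0.
have := mxrank_ker A; have := mxrankS s1; have := mxrankS s2; have := rank_leq_row A.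
by rewrite rank_rV v_neq0; lia.
Qed.

Lemma kernel_line_of_rank :
  \rank A = (p - 1)%N -> forall w : 'rV_p, w *m A = 0 -> exists l, w = l *: v.
Proof.
move=> rA w wA.
have s1 : (v <= kermx A)%MS by apply/sub_kermxP.
have /andP [_ e] : (v == kermx A)%MS.
  rewrite -(mxrank_leqif_eq s1).2; have := mxrankS s1.
  by rewrite mxrank_ker rank_rV v_neq0 rA => h; apply/eqP; lia.
have /submxP [D ->] : (w <= v)%MS by apply: submx_trans e; apply/sub_kermxP.
by exists (D 0 0); rewrite {1}(mx11_scalar D) mul_scalar_mx.
Qed.

End CorankOne.

Section LinearCombinations.
Variable R : comUnitRingType.

Lemma lin_comb0 (g : seq R) : lin_comb g 0.
Proof. by exists (fun _ => 0); rewrite big1 // => i _; rewrite mul0r. Qed.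

Lemma lin_combD (g : seq R) x y : lin_comb g x -> lin_comb g y -> lin_comb g (x + y).
Proof.
move=> [c ->] [d ->]; exists (fun i => c i + d i).
by rewrite -big_split; apply: eq_bigr => i _; rewrite mulrDl.
Qed.

Lemma lin_combMl (g : seq R) r x : lin_comb g x -> lin_comb g (r * x).
Proof.
move=> [c ->]; exists (fun i => r * c i).
by rewrite mulr_sumr; apply: eq_bigr => i _; rewrite mulrA.
Qed.

Lemma lin_comb_nth (g : seq R) i : (i < size g)%N -> lin_comb g g`_i.
Proof.
move=> Hi; exists (fun j => (j == i)%:R).
rewrite (bigD1 (Ordinal Hi)) //= eqxx mul1r big1 ?addr0 // => j.
by rewrite -val_eqE /= => /negPf ->; rewrite mul0r.
Qed.

Lemma lin_comb_ideal (I : R -> Prop) (g : seq R) : is_ideal I ->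
  (forall i, (i < size g)%N -> I g`_i) -> forall x, lin_comb g x -> I x.
Proof.
by case=> I0 ID IM Hg x [c ->]; apply: (big_ind I) => // i _; apply/IM/Hg.
Qed.

End LinearCombinations.

Section Nakayama.
Variables (R : comUnitRingType) (I S : R -> Prop).
Hypotheses (S0 : S 0) (SD : forall x y, S x -> S y -> S (x + y))
  (SM : forall r x, S x -> S (r * x)).
Hypothesis approx : forall x, I x -> exists z, S z /\ ideal_mul I (@maxideal R) (x - z).

Lemma mpow_ideal_mul_approx j w :
  ideal_mul (mpow j) I w -> exists z, S z /\ ideal_mul (mpow j.+1) I (w - z).
Proof.
move=> [l [Hl ->]]; elim: l Hl => [|[p q] l IH] Hl.
  by exists 0; split => //; rewrite big_nil subrr; apply: ideal_mul0.
have [z' [Sz' Wz']] : exists z, S z /\ ideal_mul (mpow j.+1) I (\sum_(pr <- l) pr.1 * pr.2 - z).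
  by apply: IH => pr Hpr; apply: Hl; rewrite in_cons Hpr orbT.
have [/= Hp Hq] := Hl (p, q) (mem_head _ _).
have [zq [Szq [lq [Hlq Eq]]]] := approx Hq.
exists (p * zq + z'); split; first by apply: SD => //; apply: SM.
rewrite big_cons /=.
have -> : p * q + \sum_(pr <- l) pr.1 * pr.2 - (p * zq + z') =
          p * (q - zq) + (\sum_(pr <- l) pr.1 * pr.2 - z') by ring.
apply: ideal_mulD => //; rewrite Eq.
exists [seq (p * pr.2, pr.1) | pr <- lq]; split.
  by move=> pr /mapP [pr' /Hlq [H1 H2] ->] /=; split => //; apply: mem_ideal_mul.
by rewrite big_map mulr_sumr; apply: eq_bigr => pr _ /=; ring.
Qed.

Lemma mpow_ideal_approx x : I x -> forall j, exists z, S z /\ ideal_mul (mpow j) I (x - z).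
Proof.
move=> Ix; elim => [|j [z [Sz /mpow_ideal_mul_approx [z' [Sz' W']]]]].
  by exists 0; split => //; rewrite subr0 -[x]mul1r; apply: mem_ideal_mul.
by exists (z + z'); split; [apply: SD | rewrite opprD addrA].
Qed.

Lemma nakayama N : (forall x : R, mpow N x -> x = 0) -> forall x, I x -> S x.
Proof.
move=> Hnil x /mpow_ideal_approx /(_ N) [z [Sz [l [Hl E]]]].
suff /eqP : x - z = 0 by rewrite subr_eq0 => /eqP ->.
by rewrite E big_seq big1 // => pr /Hl [/Hnil -> _]; rewrite mul0r.
Qed.

End Nakayama.

Lemma mu_uniq (R : comUnitRingType) (I : R -> Prop) n n' : mu I n -> mu I n' -> n = n'.
Proof.
move=> [[s [<- Hs]] Hn] [[s' [<- Hs']] Hn'].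
by apply/eqP; rewrite eqn_leq Hn // Hn'.
Qed.

Section MinimalGenerators.
Variables (R : comUnitRingType) (N : nat).
Hypotheses (Hloc : local_ring R) (Hnil : forall x : R, mpow N x -> x = 0).
Variables (j : nat) (s : seq R) (I : R -> Prop).
Variables (p : nat) (M : 'M[residue_field Hloc]_(p, size s)).
Hypotheses (Hs : gr_basis j s) (HI : is_ideal I).
Hypothesis I_mpow : forall y, I y -> mpow j y.
Hypothesis I_coord : forall y, I y -> (gr_coord Hloc j s y <= M)%MS.
Hypothesis I_lift : forall v, (v <= M)%MS -> exists y, I y /\ gr_coord Hloc j s y = v.
Hypothesis I_mpowS : forall y, I y -> mpow j.+1 y -> ideal_mul I (@maxideal R) y.

Local Notation gr_coord := (gr_coord Hloc j s).

Lemma mu_rank_generators : exists g, size g = \rank M /\ generates g I.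
Proof.
pose B := row_base M; pose r := \rank M.
pose f (l : 'I_r) := epsilon (inhabits 0) (fun y => I y /\ gr_coord y = row l B).
have fP l : I (f l) /\ gr_coord (f l) = row l B.
  apply: (epsilon_spec (inhabits 0) (fun y => I y /\ gr_coord y = row l B)); apply: I_lift.
  by rewrite -(eq_row_base M); apply: row_sub.
pose g := tval [tuple f l | l < r].
have gE (l : 'I_r) : g`_l = f l by rewrite -tnth_nth tnth_mktuple.
have gI i : (i < size g)%N -> I g`_i.
  by rewrite size_tuple => Hi; rewrite (gE (Ordinal Hi)); case: (fP (Ordinal Hi)).
exists g; split; first exact: size_tuple.
move=> x; split; last exact: lin_comb_ideal.
have [I0 ID IM] := HI.
apply: (nakayama (lin_comb0 g) (@lin_combD _ g) (@lin_combMl _ g) _ Hnil) => y Iy.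
have /submxP [u Eu] : (gr_coord y <= B)%MS by rewrite eq_row_base; apply: I_coord.
pose z := \sum_(i < r) residue_lift u i * g`_i.
have Iz : I z by apply: (big_ind I) => // i _; apply/IM/gI; rewrite size_tuple.
exists z; split; first by exists (residue_lift u); rewrite size_tuple.
apply: I_mpowS; first by apply: ID => //; rewrite -mulN1r; apply: IM.
apply: (gr_coord_inj Hs (I_mpow Iy) (I_mpow Iz)).
rewrite Eu /z (gr_coord_comb Hloc Hs); last by move=> i; apply/I_mpow/gI; rewrite size_tuple.
congr (_ *m _); first by apply/rowP => i; rewrite !mxE residue_liftE.
by apply/row_matrixP => i; rewrite rowK gE; case: (fP i).
Qed.

Lemma mu_rank_minimal t : generates t I -> (\rank M <= size t)%N.
Proof.
move=> Ht; pose T := \matrix_(i < size t) gr_coord t`_i.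
have tI i : (i < size t)%N -> I t`_i by move=> Hi; apply/Ht/lin_comb_nth.
suff MT : (M <= T)%MS by apply: leq_trans (mxrankS MT) (rank_leq_row T).
apply/row_subP => l; have [y [Iy <-]] := I_lift (row_sub l M).
have [c ->] := proj1 (Ht y) Iy.
by rewrite (gr_coord_comb Hloc Hs); [apply: submxMl | move=> i; apply/I_mpow/tI].
Qed.

Lemma mu_rank : mu I (\rank M).
Proof. by split; [apply: mu_rank_generators | apply: mu_rank_minimal]. Qed.

End MinimalGenerators.

Section LoewyLengthFour.
Variable R : comUnitRingType.
Hypotheses (Hloc : local_ring R) (Hm4 : forall x : R, mpow 4 x -> x = 0).
Variables s1 s2 s3 : seq R.
Hypotheses (B1 : gr_basis 1 s1) (B2 : gr_basis 2 s2) (B3 : gr_basis 3 s3).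

Local Notation c1 := (gr_coord Hloc 1 s1).
Local Notation c2 := (gr_coord Hloc 2 s2).
Local Notation c3 := (gr_coord Hloc 3 s3).
Local Notation M1 := (gr_mulmx Hloc 1 s1 s2).
Local Notation M2 := (gr_mulmx Hloc 2 s2 s3).

Lemma gr_coord1_mul r y : maxideal r -> maxideal y -> c2 (r * y) = c1 y *m M1 r.
Proof. by move=> Hr /(mpow1E Hloc) Hy; apply: gr_coord_mul. Qed.

Lemma gr_coord2_mul r y : maxideal r -> mpow 2 y -> c3 (r * y) = c2 y *m M2 r.
Proof. exact: gr_coord_mul. Qed.

Lemma gr_coord1_neq0 x : maxideal x -> ~ mpow 2 x -> c1 x != 0.
Proof. by move=> /(mpow1E Hloc) Hx Hx2; apply/eqP => /(gr_coord_eq0 Hloc B1 Hx). Qed.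

Lemma mu_maxideal : mu (@maxideal R) (size s1).
Proof.
rewrite -(mxrank1 (residue_field Hloc) (size s1)).
apply: (mu_rank Hm4 B1) => [|y /(mpow1E Hloc) //|y _|v _|y _].
- by split; [apply: maxideal0 | apply: Hloc | apply: maxidealMl].
- exact: submx1.
- by exists (gr_lift v); split; [apply/(mpow1E Hloc)/(gr_lift_mpow B1) | apply: gr_coord_lift].
- by apply: ideal_mulS => // z /(mpow1E Hloc).
Qed.

Lemma scale_maxideal_ideal r : is_ideal (scale r (@maxideal R)).
Proof.
split; first by exists 0; split; [apply: maxideal0 | rewrite mulr0].
  by move=> _ _ [x [Hx ->]] [y [Hy ->]]; exists (x + y); split; [apply: Hloc | rewrite mulrDr].
by move=> t _ [x [Hx ->]]; exists (t * x); split; [apply: maxidealMl | rewrite mulrCA].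
Qed.

Lemma mu_scale_maxideal r : maxideal r -> (forall z, mpow 3 z -> scale r (mpow 2) z) ->
  mu (scale r (@maxideal R)) (\rank (M1 r)).
Proof.
move=> Hr Sr; apply: (mu_rank Hm4 B2 (scale_maxideal_ideal r)).
- by move=> _ [x [/(mpow1E Hloc) Hx ->]]; apply: mpow_maxidealMl.
- by move=> _ [x [Hx ->]]; rewrite gr_coord1_mul //; apply: submxMl.
- move=> _ /submxP [u ->]; have Hu := gr_lift_mpow B1 u.
  exists (r * gr_lift u); split; first by exists (gr_lift u); split => //; apply/(mpow1E Hloc).
  by rewrite gr_coord1_mul ?gr_coord_lift //; apply/(mpow1E Hloc).
- move=> y _ /Sr [w [[l [Hl ->]] ->]].
  exists [seq (r * pr.1, pr.2) | pr <- l]; split.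
    move=> pr /mapP [pr' /Hl [H1 H2] ->]; split => //.
    by exists pr'.1; split => //; apply/(mpow1E Hloc).
  by rewrite big_map mulr_sumr; apply: eq_bigr => pr _; rewrite mulrA.
Qed.

Lemma mpow3_scaleP r : maxideal r ->
  (forall z, mpow 3 z -> scale r (mpow 2) z) <-> \rank (M2 r) = size s3.
Proof.
move=> Hr; split=> [Sr|rM].
  apply/eqP; rewrite eqn_leq rank_leq_col.
  rewrite -{1}(mxrank1 (residue_field Hloc) (size s3)) mxrankS //.
  apply/row_subP => i; have [y [Hy Ey]] := Sr _ (gr_lift_mpow B3 (row i 1%:M)).
  by rewrite -(gr_coord_lift B3 (row i 1%:M)) Ey gr_coord2_mul //; apply: submxMl.
move=> z Hz; have /submxP [u Eu] : (c3 z <= M2 r)%MS.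
  by apply: submx_full; rewrite /row_full rM.
have Hu := gr_lift_mpow B2 u.
exists (gr_lift u); split => //; apply/eqP; rewrite -subr_eq0; apply/eqP/Hm4.
apply: (gr_coord_inj B3 Hz); first exact: mpow_maxidealMl.
by rewrite gr_coord2_mul // gr_coord_lift.
Qed.

(* M1 r has corank one and kills the class of r', so its kernel is the line through it. *)
Lemma cofactor_line r r' t : maxideal r -> maxideal r' -> ~ mpow 2 r' -> r * r' = 0 ->
  \rank (M1 r) = (size s1 - 1)%N -> maxideal t -> mpow 3 (r * t) ->
  exists l, mpow 2 (t - l * r').
Proof.
move=> Hr Hr' Hr'2 rr' rM Ht Hrt.
have kill : c1 r' *m M1 r = 0 by rewrite -gr_coord1_mul // rr' (gr_coord0 Hloc B2).
have /(kernel_line_of_rank (gr_coord1_neq0 Hr' Hr'2) kill rM) [l El] : c1 t *m M1 r = 0.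
  by rewrite -gr_coord1_mul //; apply/(gr_coord_eq0 Hloc B2) => //; apply: mpowSW.
have Hr'1 : mpow 1 r' by apply/(mpow1E Hloc).
exists (repr l); apply: (gr_coord_inj B1); first exact/(mpow1E Hloc); first exact: mpowMl.
by rewrite (gr_coordMl Hloc B1) ?residueK.
Qed.

Hypothesis Hdim : (size s2 + 1 = size s1 + size s3)%N.

Section Pair.
Variables a b : R.
Hypotheses (Ham : maxideal a) (Ham2 : ~ mpow 2 a) (Hbm : maxideal b) (Hbm2 : ~ mpow 2 b).

Section AnnPrincipal.
Hypothesis Hann : subset_eq (ann a) (principal b).

Lemma ann_mul_eq0 : a * b = 0.
Proof. by rewrite mulrC; apply/Hann; exists 1; rewrite mulr1. Qed.

Lemma ann_cofactor x : mpow 2 x -> x * a = 0 -> exists2 t, maxideal t & x = b * t.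
Proof.
by move=> Hx /Hann [t Et]; exists t => //; apply: (maxideal_cofactor Hbm2); rewrite -Et.
Qed.

Lemma ann_kermx_mul2_sub : (kermx (M2 a) <= M1 b)%MS.
Proof.
apply/row_subP => i; set w := row i _.
have wA : w *m M2 a = 0 by rewrite /w -row_mul mulmx_ker row0.
have Hy := gr_lift_mpow B2 w.
have Hay : a * gr_lift w = 0.
  apply/Hm4/(gr_coord_eq0 Hloc B3 (mpow_maxidealMl Ham Hy)).
  by rewrite gr_coord2_mul // gr_coord_lift.
have [t Ht Et] : exists2 t, maxideal t & gr_lift w = b * t.
  by apply: ann_cofactor => //; rewrite mulrC.
by rewrite -(gr_coord_lift B2 w) Et gr_coord1_mul //; apply: submxMl.
Qed.

Lemma ann_ranks : \rank (M2 a) = size s3 /\ \rank (M1 b) = (size s1 - 1)%N.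
Proof.
have kill : c1 a *m M1 b = 0.
  by rewrite -gr_coord1_mul // mulrC ann_mul_eq0 (gr_coord0 Hloc B2).
have : (1 <= \rank (kermx (M1 b)))%N.
  have /mxrankS : (c1 a <= kermx (M1 b))%MS by apply/sub_kermxP.
  by rewrite rank_rV gr_coord1_neq0.
have := mxrank_ker (M1 b); have := mxrank_ker (M2 a); have := mxrankS ann_kermx_mul2_sub.
by have := rank_leq_col (M2 a); have := rank_leq_row (M2 a); lia.
Qed.

Lemma ann_mpow3_scale_a z : mpow 3 z -> scale a (mpow 2) z.
Proof. by move: z; apply/mpow3_scaleP => //; case: ann_ranks. Qed.

Lemma ann_mpow3_scale_b z : mpow 3 z -> scale b (mpow 2) z.
Proof.
move=> Hz; have [t Ht Et] := ann_cofactor (mpowSW Hz) (Hm4 (mem_ideal_mul Hz Ham)).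
have [l Hl] : exists l, mpow 2 (t - l * a).
  apply: (cofactor_line Hbm Ham Ham2) => //; last by rewrite -Et.
    by rewrite mulrC ann_mul_eq0.
  by case: ann_ranks.
exists (t - l * a); split => //.
by rewrite Et mulrBr mulrCA (mulrC b a) ann_mul_eq0 mulr0 subr0.
Qed.

Lemma ann_rank_mul1 : \rank (M1 a) = (size s1 - 1)%N.
Proof.
have kill : c1 b *m M1 a = 0 by rewrite -gr_coord1_mul // ann_mul_eq0 (gr_coord0 Hloc B2).
apply: (rank_of_kernel_line (gr_coord1_neq0 Hbm Hbm2) kill) => w wA.
have Hx := gr_lift_mpow B1 w.
have : mpow 3 (a * gr_lift w).
  apply/(gr_coord_eq0 Hloc B2 (mpow_maxidealMl Ham Hx)).
  by rewrite gr_coord1_mul ?gr_coord_lift //; apply/(mpow1E Hloc).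
move=> /ann_mpow3_scale_a [y [Hy Ey]].
have [t Et] : principal b (gr_lift w - y).
  by apply/Hann; rewrite /ann mulrBl mulrC Ey mulrC subrr.
have Hy1 := mpowSW Hy; exists (residue Hloc t).
rewrite -(gr_coord_lift B1 w) -(subrK y (gr_lift w)) (gr_coordD Hloc B1 (mpowB Hx Hy1) Hy1).
rewrite (proj2 (gr_coord_eq0 Hloc B1 Hy1) Hy) addr0 Et mulrC (gr_coordMl Hloc B1) //.
exact/(mpow1E Hloc).
Qed.

Lemma ann_principal_conditions :
  [/\ a * b = 0, forall z, mpow 3 z -> scale a (mpow 2) z,
      forall z, mpow 3 z -> scale b (mpow 2) z,
      \rank (M1 a) = (size s1 - 1)%N & \rank (M1 b) = (size s1 - 1)%N].
Proof.
split; [exact: ann_mul_eq0 | exact: ann_mpow3_scale_a | exact: ann_mpow3_scale_b |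
       exact: ann_rank_mul1 | by case: ann_ranks].
Qed.

End AnnPrincipal.

Section FromConditions.
Hypotheses (ab0 : a * b = 0) (Sa : forall z, mpow 3 z -> scale a (mpow 2) z)
  (Sb : forall z, mpow 3 z -> scale b (mpow 2) z).
Hypotheses (ra : \rank (M1 a) = (size s1 - 1)%N) (rb : \rank (M1 b) = (size s1 - 1)%N).

Lemma conditions_kermx_mul2_sub : (kermx (M2 a) <= M1 b)%MS.
Proof.
have rA2 : \rank (M2 a) = size s3 by apply/mpow3_scaleP.
have BK : (M1 b <= kermx (M2 a))%MS.
  apply/sub_kermxP/row_matrixP => i; rewrite row0 row_mul rowK.
  have Hbs : mpow 2 (b * s1`_i).
    by apply: mpow_maxidealMl => //; apply: gr_basis_mpow.
  by rewrite -gr_coord2_mul // mulrA ab0 mul0r (gr_coord0 Hloc B3).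
have := (mxrank_leqif_eq BK).2; rewrite rb mxrank_ker rA2.
have -> : (size s1 - 1 == size s2 - size s3)%N by apply/eqP; lia.
by move/esym/andP => [].
Qed.

Lemma conditions_ann_sub_principal x : x * a = 0 -> exists t, x = b * t.
Proof.
move=> xa0; have Hx : maxideal x.
  by apply: (maxideal_cofactor Ham2); rewrite mulrC xa0; apply: mpow0.
have [l Hl] : exists l, mpow 2 (x - l * b).
  by apply: (cofactor_line Ham Hbm Hbm2) => //; rewrite mulrC xa0; apply: mpow0.
set y := x - l * b in Hl.
have ay0 : a * y = 0 by rewrite /y mulrBr mulrCA ab0 mulr0 mulrC xa0 subr0.
have /submxP [u Eu] : (c2 y <= M1 b)%MS.
  apply: submx_trans conditions_kermx_mul2_sub; apply/sub_kermxP.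
  by rewrite -gr_coord2_mul // ay0 (gr_coord0 Hloc B3).
have Hu := gr_lift_mpow B1 u.
have Hbu : mpow 2 (b * gr_lift u) by apply: mpow_maxidealMl.
have /Sb [w [_ Ew]] : mpow 3 (y - b * gr_lift u).
  apply: (gr_coord_inj B2 Hl Hbu).
  by rewrite gr_coord1_mul ?gr_coord_lift //; apply/(mpow1E Hloc).
by exists (l + gr_lift u + w); rewrite !mulrDr -Ew /y; ring.
Qed.

End FromConditions.

End Pair.

Lemma exact_pair_of_conditions a b :
  maxideal a -> ~ mpow 2 a -> maxideal b -> ~ mpow 2 b ->
  a * b = 0 -> (forall z, mpow 3 z -> scale a (mpow 2) z) ->
  (forall z, mpow 3 z -> scale b (mpow 2) z) ->
  \rank (M1 a) = (size s1 - 1)%N -> \rank (M1 b) = (size s1 - 1)%N -> exact_pair a b.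
Proof.
move=> Ham Ham2 Hbm Hbm2 ab0 Sa Sb ra rb.
have ba0 : b * a = 0 by rewrite mulrC.
have nz x : ~ mpow 2 x -> x != 0.
  by move=> Hx; apply: contra_notN Hx => /eqP ->; apply: mpow0.
split; rewrite ?nz //; split=> x; split.
- exact: conditions_ann_sub_principal.
- by move=> [t ->]; rewrite /ann mulrAC ba0 mul0r.
- exact: conditions_ann_sub_principal.
- by move=> [t ->]; rewrite /ann mulrAC ab0 mul0r.
Qed.

End LoewyLengthFour.

Lemma sum_ord_trunc (V : nmodType) (f : nat -> V) N K :
  (forall n, (N <= n)%N -> f n = 0) -> \sum_(n < N + K) f n = \sum_(n < N) f n.
Proof.
move=> H; elim: K => [|K IH]; first by rewrite addn0.
by rewrite addnS big_ord_recr /= IH H ?leq_addr // addr0.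
Qed.

Section HilbertFunction.
Variable R : comUnitRingType.
Hypothesis Hloc : local_ring R.

Lemma hilb_coeff_uniq n t t' : hilb_coeff R n t -> hilb_coeff R n t' -> t = t'.
Proof. by move=> [s [<- Hs]] [s' [<- Hs']]; apply: gr_basis_size Hs Hs'. Qed.

Lemma hilb_coeff0 : hilb_coeff R 0 1.
Proof.
exists [:: 1 : R]; split => //; split => // [c|y _].
  by rewrite big_ord1 mulr1 => /(mpow1E Hloc) H i; rewrite ltnS leqn0 => /eqP ->.
by exists (fun _ => y); rewrite big_ord1 mulr1 subrr; apply: ideal_mul0.
Qed.

Lemma hilb_coeff_nil N n :
  (forall x : R, mpow N x -> x = 0) -> (N <= n)%N -> hilb_coeff R n 0.
Proof.
move=> Hnil Hn; exists [::]; split => //; split => // y Hy.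
by exists (fun _ => 0); rewrite (Hnil _ (mpow_le Hn Hy)) big_ord0 subrr; apply: mpow0.
Qed.

Lemma hilbert_minus1_zero_bases :
  (forall x : R, mpow 4 x -> x = 0) -> hilbert_minus1_zero R ->
  exists s1 s2 s3 : seq R, [/\ gr_basis 1 s1, gr_basis 2 s2, gr_basis 3 s3 &
                              (size s2 + 1 = size s1 + size s3)%N].
Proof.
move=> Hm4 [N [e [He HeN Hsum]]].
have [s1 [E1 B1]] := He 1%N; have [s2 [E2 B2]] := He 2%N; have [s3 [E3 B3]] := He 3%N.
exists s1, s2, s3; split => //.
pose f n : int := (-1) ^+ n * (e n)%:R.
have f0 n : (4 <= n)%N -> f n = 0.
  by move=> Hn; rewrite /f (hilb_coeff_uniq (He n) (hilb_coeff_nil Hm4 Hn)) mulr0.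
have : \sum_(n < 4) f n = 0.
  rewrite -(sum_ord_trunc N f0) addnC sum_ord_trunc // => n /HeN.
  by rewrite /f => ->; rewrite mulr0.
rewrite !big_ord_recr big_ord0 /= /f (hilb_coeff_uniq (He 0%N) hilb_coeff0) E1 E2 E3.
by rewrite !exprS expr0 /=; lia.
Qed.

End HilbertFunction.

Theorem proposition2p3 (R : comUnitRingType) (a b : R)
  (Hnoeth : noetherian R) (Hloc : local_ring R)
  (Hm4 : forall x : R, mpow 4 x -> x = 0)
  (HH : hilbert_minus1_zero R)
  (Ham : maxideal a) (Ham2 : ~ mpow 2 a)
  (Hbm : maxideal b) (Hbm2 : ~ mpow 2 b) :
  [<-> exact_pair a b;
       subset_eq (ann a) (principal b);
       [/\ a * b = 0,
           subset_eq (scale a (mpow 2)) (mpow 3),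
           subset_eq (mpow 3) (scale b (mpow 2)) &
           exists n : nat, [/\ mu (@maxideal R) n,
                              mu (scale a (@maxideal R)) (n - 1)%N &
                              mu (scale b (@maxideal R)) (n - 1)%N]]].
Proof.
have [s1 [s2 [s3 [B1 B2 B3 Hdim]]]] := hilbert_minus1_zero_bases Hloc Hm4 HH.
have mu_m := mu_maxideal Hloc Hm4 B1.
have mu_scale := mu_scale_maxideal Hloc Hm4 B1 B2.
tfae=> [[_ _ _ _ []] // | Hann | [ab0 Sa Sb [n [mn ma mb]]]].
- have [ab0 Sa Sb ra rb] :=
    ann_principal_conditions Hloc Hm4 B1 B2 B3 Hdim Ham Ham2 Hbm Hbm2 Hann.
  split=> // [x|x|]; first by split=> [/(scale_mpow Ham)|/Sa].
    by split=> [/Sb|/(scale_mpow Hbm)].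
  exists (size s1); split=> //; [rewrite -ra | rewrite -rb]; exact: mu_scale.
have {}Sa z : mpow 3 z -> scale a (mpow 2) z by move=> /Sa.
have {}Sb z : mpow 3 z -> scale b (mpow 2) z by move=> /Sb.
have en : n = size s1 := mu_uniq mn mu_m.
apply: (exact_pair_of_conditions Hm4 B1 B2 B3 Hdim) => //.
  by rewrite (mu_uniq (mu_scale _ Ham Sa) ma) en.
by rewrite (mu_uniq (mu_scale _ Hbm Sb) mb) en.
Qed.
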